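(* Let $n\ge 2$, $a,b\in\mathbb{Z}_n$, $Q=Q_{a,b}(\mathbb{Z}_n)$, and $x=(x_1,x_2,x_3)$, $y=(y_1,y_2,y_3)$, $z=(z_1,z_2,z_3)\in Q$. Then: (i) $x\backslash y=(y_1-x_1-(y_3-x_3)x_3y_2-a(x_2,y_2-x_2)_n-b(x_3,y_3-x_3)_n,\ y_2-x_2,\ y_3-x_3)$; (ii) $(xy)\backslash(x(yz))=(z_1+y_3(x_3z_2-x_2z_3),\ z_2,\ z_3)$; (iii) $Q$ is a nonassociative commutative A-loop of order $n^3$; (iv) $N_\lambda(Q)=Z(Q)=\mathbb{Z}_n\times 0\times 0$ and $N_\mu(Q)=\mathbb{Z}_n\times\mathbb{Z}_n\times 0$ as subsets of $Q$; (v) $Q/Z(Q)\cong\mathrm{Inn}(Q)\cong\mathbb{Z}_n\times\mathbb{Z}_n$, and $\mathrm{Inn}(Q)=\{L_{u,v}:u,v\in Q\}$; (vi) for every integer $m\ge0$, $x^m=\big(mx_1+2\binom{m+1}{3}x_2x_3^2+at_2+bt_3,\ mx_2,\ mx_3\big)$, where $t_i=\sum_{k=1}^{m-1}(x_i,kx_i)_n$ (the sum is empty and the binomial coefficient is $0$ when $m<2$).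
   Context: Identify $\mathbb{Z}_n$ with $\{0,1,\dots,n-1\}$; all coordinate arithmetic is in $\mathbb{Z}_n$. The overflow indicator is $(x,y)_n=1$ if $x+y\ge n$ as integers and $(x,y)_n=0$ otherwise. For $a,b\in\mathbb{Z}_n$, $Q_{a,b}(\mathbb{Z}_n)$ is the set $\mathbb{Z}_n^3$ with multiplication $(x_1,x_2,x_3)(y_1,y_2,y_3)=(x_1+y_1+(x_2+y_2)x_3y_3+a(x_2,y_2)_n+b(x_3,y_3)_n,\ x_2+y_2,\ x_3+y_3)$; it is a commutative loop with neutral element $(0,0,0)$. $u\backslash w$ denotes the unique $z$ with $uz=w$; $L_{u,v}=L_{vu}^{-1}L_vL_u$. $\mathrm{Inn}(Q)$ is the group generated by $L_{x,y}$, $R_{x,y}=R_{xy}^{-1}R_yR_x$, $T_x=L_x^{-1}R_x$; an A-loop is a loop whose inner mappings are automorphisms. Nuclei: $N_\lambda=\{x:(xy)z=x(yz)\ \forall y,z\}$, $N_\mu=\{y:(xy)z=x(yz)\ \forall x,z\}$; $Z(Q)$ is the center. Powers are well defined as the loop is power-associative. *)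

From HB Require Import structures.
From mathcomp Require Import all_boot all_order all_algebra all_fingroup.
Set Implicit Arguments. Unset Strict Implicit. Unset Printing Implicit Defensive.
Import GRing.Theory.

Section LoopNotions.
Variables (T : finType) (op : T -> T -> T).
Local Open Scope group_scope.

Definition ldiv (u w : T) : T := odflt w [pick z | op u z == w].
Definition rdiv (w u : T) : T := odflt w [pick z | op z u == w].

Definition is_loop (e : T) : Prop :=
  (forall x, op e x = x /\ op x e = x) /\
  (forall u w, exists! z, op u z = w) /\
  (forall u w, exists! z, op z u = w).

(* inner mappings, as functions; composition is right-to-left *)
Definition Lmap (u v : T) : T -> T := fun w => ldiv (op v u) (op v (op u w)).
Definition Rmap (u v : T) : T -> T := fun w => rdiv (op (op w u) v) (op u v).
Definition Tmap (u : T) : T -> T := fun w => ldiv u (op w u).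

(* a bijective self-map of T as a permutation (identity if not injective;
   in a loop all the maps above are bijective) *)
Definition fperm (f : T -> T) : {perm T} :=
  match injectiveP f with ReflectT H => perm H | ReflectF _ => 1 end.

Definition Lset : {set {perm T}} := [set fperm (Lmap u v) | u in T, v in T].

Definition Inn : {set {perm T}} :=
  << Lset :|: [set fperm (Rmap u v) | u in T, v in T]
          :|: [set fperm (Tmap u) | u in T] >>.

Definition is_Aloop (e : T) : Prop :=
  is_loop e /\ forall p, p \in Inn -> forall x y, p (op x y) = op (p x) (p y).

Definition commutative_op : Prop := forall x y, op x y = op y x.
Definition associative_op : Prop := forall x y z, op (op x y) z = op x (op y z).

Definition Nlam : {set T} := [set x | [forall y, forall z, op (op x y) z == op x (op y z)]].
Definition Nmu : {set T} := [set y | [forall x, forall z, op (op x y) z == op x (op y z)]].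
Definition Nrho : {set T} := [set z | [forall x, forall y, op (op x y) z == op x (op y z)]].
Definition Zc : {set T} :=
  [set x | [forall y, op x y == op y x] && (x \in Nlam) && (x \in Nmu) && (x \in Nrho)].

Definition zcoset (x : T) : {set T} := [set op x z | z in Zc].
Definition quotZ : {set {set T}} := [set zcoset x | x in T].

Definition qexp (e x : T) (m : nat) : T := iter m (fun y => op y x) e.
End LoopNotions.

Local Open Scope ring_scope.

Notation Qt n := ('Z_n * 'Z_n * 'Z_n)%type.

Definition ovf (n : nat) (x y : 'Z_n) : 'Z_n := (nat_of_bool (n <= val x + val y)%N)%:R.

Definition mulQ (n : nat) (a b : 'Z_n) (x y : Qt n) : Qt n :=
  let: (x1, x2, x3) := x in let: (y1, y2, y3) := y in
  (x1 + y1 + (x2 + y2) * x3 * y3 + a * ovf x2 y2 + b * ovf x3 y3, x2 + y2, x3 + y3).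

Definition addZ2 (n : nat) (p q : 'Z_n * 'Z_n) : 'Z_n * 'Z_n := (p.1 + q.1, p.2 + q.2).

From HB Require Import structures.
From mathcomp Require Import all_boot all_order all_algebra all_fingroup.
From mathcomp Require Import ring zify.
Import GRing.Theory.
Local Open Scope ring_scope.

(* The overflow indicator (x,y)_n is the carry of the addition x + y in Z_n,
   and carries form a 2-cocycle of Z_n (ovf_cocycle).  Using it, the whole
   nonassociativity of Q is concentrated in the first coordinate:
       x(yz) = ((xy)z) shifted by y3 (x3 z2 - x2 z3)             (mul_assoc_shift)
   Everything else follows from this associator formula:
   - Q is a commutative loop with an explicit left division (i), and (ii) is
     the associator formula read through left division;
   - the inner mappings L_{u,v} and R_{u,v} are the shears
     w |-> (w1 + al w2 + be w3, w2, w3), and T_u is the identity, so Inn(Q) is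
     the group of shears, isomorphic to Z_n x Z_n, already exhausted by the
     L_{u,v}, and consisting of automorphisms (iii), (v);
   - the nuclei and the center are read off from the vanishing of the
     associator (iv), and the Z(Q)-cosets are the fibres of x |-> (x2, x3) (v);
   - the power formula (vi) is an induction on m, where the binomial term
     grows by 2 C(m+1, 2) = (m+1) m. *)

Section FiniteLoopFacts.
Variables (T : finType) (op : T -> T -> T).

Lemma ldiv_cancel (cancel_l : forall u, injective (op u)) u z w :
  op u z = w -> ldiv op u w = z.
Proof.
move=> uz_w; rewrite /ldiv; case: pickP => [z' /eqP uz'_w | none].
  by apply: (cancel_l u); rewrite uz_w uz'_w.
by have := none z; rewrite /= uz_w eqxx.
Qed.

Lemma rdiv_cancel (cancel_r : forall u, injective (op^~ u)) u z w :
  op z u = w -> rdiv op w u = z.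
Proof.
move=> zu_w; rewrite /rdiv; case: pickP => [z' /eqP z'u_w | none].
  by apply: (cancel_r u); rewrite /= zu_w z'u_w.
by have := none z; rewrite /= zu_w eqxx.
Qed.

End FiniteLoopFacts.

Lemma fperm_eq (T : finType) (f : T -> T) (p : {perm T}) : f =1 p -> fperm f = p.
Proof.
move=> fp; rewrite /fperm; case: injectiveP => [f_inj | f_not_inj].
  by apply/permP => w; rewrite permE fp.
by case: f_not_inj; apply: (eq_inj (@perm_inj _ p)) => w; rewrite fp.
Qed.

Lemma carry_cocycle (N X Y W : nat) : (X < N)%N -> (Y < N)%N -> (W < N)%N ->
  ((N <= X + Y) + (N <= (X + Y) %% N + W) = (N <= Y + W) + (N <= X + (Y + W) %% N))%N.
Proof.
move=> ltXN ltYN ltWN.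
have modE s : (s < N + N)%N -> (s %% N = if N <= s then s - N else s)%N.
  move=> lt_s; case: leqP => le_Ns; last by rewrite modn_small.
  by rewrite -{1}(subnK le_Ns) modnDr modn_small // ltn_subLR.
rewrite !modE; try lia.
by repeat case: leqP => ?; lia.
Qed.

(* The modulus is written n'.+2, the form under which 'Z_n is a ring. *)
Section Overflow.
Context {n' : nat}.
Local Notation Z := 'Z_n'.+2.

Lemma ovf_cocycle (x y z : Z) :
  ovf x y + ovf (x + y) z = ovf y z + ovf x (y + z).
Proof.
have valD (u v : Z) : val (u + v) = ((val u + val v) %% n'.+2)%N by [].
by rewrite /ovf -!natrD !valD carry_cocycle ?ltn_ord.
Qed.

Lemma ovfC (x y : Z) : ovf x y = ovf y x.
Proof. by rewrite /ovf addnC. Qed.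

Lemma ovf0r (x : Z) : ovf x 0 = 0.
Proof. by rewrite /ovf /= addn0 leqNgt ltn_ord. Qed.

Lemma ovf0l (x : Z) : ovf 0 x = 0.
Proof. by rewrite ovfC ovf0r. Qed.

End Overflow.

Section LoopQ.
Variables (n' : nat) (a b : 'Z_n'.+2).
Local Notation Z := 'Z_n'.+2.
Local Notation T := (Qt n'.+2).
Local Notation mul := (@mulQ n'.+2 a b).
Local Notation e := ((0, 0, 0) : T).

Lemma mulE (x1 x2 x3 y1 y2 y3 : Z) : mul (x1, x2, x3) (y1, y2, y3) =
  (x1 + y1 + (x2 + y2) * x3 * y3 + a * ovf x2 y2 + b * ovf x3 y3, x2 + y2, x3 + y3).
Proof. by []. Qed.

Lemma mulC : commutative_op mul.
Proof.
case=> [[x1 x2] x3] [[y1 y2] y3]; rewrite !mulE (ovfC x2) (ovfC x3).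
congr (_, _, _); ring.
Qed.

(* Translation of the first coordinate, i.e. multiplication by (d, 0, 0) in Z(Q). *)
Definition shift (w : T) (d : Z) : T := (w.1.1 + d, w.1.2, w.2).

Lemma mul_shift u z d : mul u (shift z d) = shift (mul u z) d.
Proof.
case: u z => [[u1 u2] u3] [[z1 z2] z3]; rewrite /shift !mulE /=.
congr (_, _, _); ring.
Qed.

Lemma shiftK d : cancel (shift^~ d) (shift^~ (- d)).
Proof. by case=> [[w1 w2] w3]; rewrite /shift /= addrK. Qed.

Lemma shift_eq w d : (shift w d == w) = (d == 0).
Proof.
case: w => [[w1 w2] w3]; rewrite /shift /= !xpair_eqE !eqxx !andbT.
by rewrite -{2}[w1]addr0 (inj_eq (addrI w1)).
Qed.

(* The associator of Q: x(yz) = ((xy)z) shifted by assoc_defect x y z.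
   The carries of the three additions cancel by the cocycle identity. *)
Definition assoc_defect (x y z : T) : Z := y.2 * (x.2 * z.1.2 - x.1.2 * z.2).

Lemma mul_assoc_shift x y z :
  mul x (mul y z) = shift (mul (mul x y) z) (assoc_defect x y z).
Proof.
case: x y z => [[x1 x2] x3] [[y1 y2] y3] [[z1 z2] z3].
have cocycle2 := ovf_cocycle x2 y2 z2; have cocycle3 := ovf_cocycle x3 y3 z3.
rewrite /assoc_defect /shift !mulE /=; congr (_, _, _); [|exact: addrA..].
rewrite -[ovf x2 (y2 + z2)](addKr (ovf y2 z2)) -cocycle2.
rewrite -[ovf x3 (y3 + z3)](addKr (ovf y3 z3)) -cocycle3.
ring.
Qed.

Lemma assoc_iff x y z :
  (mul (mul x y) z == mul x (mul y z)) = (assoc_defect x y z == 0).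
Proof. by rewrite mul_assoc_shift eq_sym shift_eq. Qed.

Lemma mul_cancel u : injective (mul u).
Proof.
case: u => [[u1 u2] u3] [[z1 z2] z3] [[w1 w2] w3]; rewrite !mulE.
move=> eq; move: (congr1 (fun t => t.1.1) eq) (congr1 (fun t => t.1.2) eq).
move: (congr1 snd eq) => /= /addrI eq3 eq1 /addrI eq2; subst w2 w3.
by move: eq1 => /addIr/addIr/addIr/addrI ->.
Qed.

Lemma mul_cancel_r u : injective (mul^~ u).
Proof. by move=> z w /=; rewrite !(mulC _ u); apply: mul_cancel. Qed.

Definition ldivQ (x y : T) : T :=
  let: (x1, x2, x3) := x in let: (y1, y2, y3) := y in
  (y1 - x1 - (y3 - x3) * x3 * y2 - a * ovf x2 (y2 - x2) - b * ovf x3 (y3 - x3),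
   y2 - x2, y3 - x3).

Lemma mul_ldivQ x y : mul x (ldivQ x y) = y.
Proof.
case: x y => [[x1 x2] x3] [[y1 y2] y3]; rewrite /ldivQ mulE !subrKC.
congr (_, _, _); ring.
Qed.

Lemma ldivE x y : ldiv mul x y = ldivQ x y.
Proof. exact/ldiv_cancel/mul_ldivQ/mul_cancel. Qed.

Lemma ldiv_assoc x y z :
  ldiv mul (mul x y) (mul x (mul y z)) = shift z (assoc_defect x y z).
Proof. by apply: ldiv_cancel mul_cancel _ _ _ _; rewrite mul_shift mul_assoc_shift. Qed.

Lemma mulQ_loop : is_loop mul e.
Proof.
have unit_l x : mul e x = x.
  by case: x => [[x1 x2] x3]; rewrite mulE !ovf0l; congr (_, _, _); ring.
split; first by move=> x; rewrite (mulC x) unit_l.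
split=> u w.
- exists (ldivQ u w); split=> [|z uz_w]; first exact: mul_ldivQ.
  by apply: (@mul_cancel u); rewrite uz_w mul_ldivQ.
- exists (ldivQ u w); split=> [|z zu_w]; first by rewrite mulC mul_ldivQ.
  by apply: (@mul_cancel u); rewrite (mulC u z) zu_w mul_ldivQ.
Qed.

(* The associator of (0,0,1), (0,0,1), (0,1,0) is 1. *)
Lemma mulQ_nonassoc : ~ associative_op mul.
Proof.
move=> /(_ (0, 0, 1) (0, 0, 1) (0, 1, 0)) /eqP.
by rewrite assoc_iff /assoc_defect /= !mul1r mulr0 subr0 oner_eq0.
Qed.

Lemma card_Q : #|[set: T]| = (n'.+2 ^ 3)%N.
Proof. by rewrite cardsT !card_prod card_ord expnS expnS expn1 mulnA. Qed.

(* Nuclei and center: x is in a nucleus iff the associator defect vanishes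
   identically in the other two arguments; testing against the basis vectors
   (0,1,0), (0,0,1) forces the relevant coordinates of x to vanish. *)
Lemma Nlam_eq : Nlam mul = [set x : T | (x.1.2 == 0) && (x.2 == 0)].
Proof.
apply/setP => x; rewrite !inE; apply/idP/idP => [/forallP nuc | /andP[/eqP x2_0 /eqP x3_0]].
  have /forallP/(_ (0, 1, 0)) := nuc (0, 0, 1).
  have /forallP/(_ (0, 0, 1)) := nuc (0, 0, 1).
  rewrite !assoc_iff /assoc_defect /= !mul1r !mulr1 !mulr0 sub0r subr0 oppr_eq0.
  by move=> -> ->.
apply/forallP => y; apply/forallP => z.
by rewrite assoc_iff /assoc_defect x2_0 x3_0 !mul0r subrr mulr0.
Qed.

(* The middle nucleus: only y3 enters the associator as a factor. *)
Lemma Nmu_eq : Nmu mul = [set x : T | x.2 == 0].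
Proof.
apply/setP => y; rewrite !inE; apply/idP/idP => [/forallP nuc | /eqP y3_0].
  have /forallP/(_ (0, 1, 0)) := nuc (0, 0, 1).
  by rewrite assoc_iff /assoc_defect /= !mul1r !mulr0 subr0 mulr1.
apply/forallP => x; apply/forallP => z.
by rewrite assoc_iff /assoc_defect y3_0 mul0r.
Qed.

(* The center coincides with the left nucleus, which lies in the right one. *)
Lemma Zc_eq : Zc mul = [set x : T | (x.1.2 == 0) && (x.2 == 0)].
Proof.
apply/setP => x; rewrite [in RHS]inE /Zc inE Nlam_eq Nmu_eq !inE.
have [/andP[/eqP x2_0 /eqP x3_0] | ] := boolP ((x.1.2 == 0) && (x.2 == 0)); last by rewrite andbF.
have comm : [forall y, mul x y == mul y x] by apply/forallP => y; rewrite mulC.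
have nuc_r : [forall u, forall v, mul (mul u v) x == mul u (mul v x)].
  apply/forallP => u; apply/forallP => v.
  by rewrite assoc_iff /assoc_defect x2_0 x3_0 !mulr0 subrr mulr0.
by rewrite comm nuc_r x3_0 eqxx.
Qed.

Lemma zcosetE x : zcoset mul x = [set y : T | (y.1.2 == x.1.2) && (y.2 == x.2)].
Proof.
case: x => [[x1 x2] x3]; apply/setP => -[[y1 y2] y3]; rewrite inE.
apply/imsetP/andP => [[z] | [/eqP/= -> /eqP/= ->]].
  rewrite Zc_eq inE; case: z => [[z1 z2] z3] /andP[/eqP/= -> /eqP/= ->].
  by rewrite !addr0 => -[_ -> ->].
exists (y1 - x1, 0, 0); first by rewrite Zc_eq inE /= eqxx.
by rewrite /= !ovf0r; congr (_, _, _); ring.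
Qed.

Definition coset_coords (S : {set T}) : Z * Z :=
  let p := odflt e [pick x in S] in (p.1.2, p.2).

Lemma coset_coordsE x : coset_coords (zcoset mul x) = (x.1.2, x.2).
Proof.
rewrite /coset_coords; case: pickP => [y | none] /=.
  by rewrite zcosetE inE => /andP[/eqP-> /eqP->].
by have := none x; rewrite zcosetE inE !eqxx.
Qed.

Lemma quotZ_iso :
  exists phi : {set T} -> Z * Z,
    {in quotZ mul &, injective phi} /\ phi @: quotZ mul = setT /\
    (forall x y, phi (zcoset mul (mul x y)) =
                 addZ2 (phi (zcoset mul x)) (phi (zcoset mul y))).
Proof.
exists coset_coords; split; [|split].
- move=> _ _ /imsetP[x _ ->] /imsetP[y _ ->]; rewrite !coset_coordsE => -[eq2 eq3].
  by rewrite !zcosetE eq2 eq3.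
- apply/setP => -[al be]; rewrite inE; apply/imsetP.
  exists (zcoset mul (0, al, be)); first exact: imset_f.
  by rewrite coset_coordsE.
- by case=> [[x1 x2] x3] [[y1 y2] y3]; rewrite !coset_coordsE.
Qed.

(* Inner mappings are shears fixing the last two coordinates. *)
Definition shear (al be : Z) (w : T) : T := (w.1.1 + al * w.1.2 + be * w.2, w.1.2, w.2).

Lemma shearK al be : cancel (shear al be) (shear (- al) (- be)).
Proof. by case=> [[w1 w2] w3]; rewrite /shear /=; congr (_, _, _); ring. Qed.

Definition shear_perm al be : {perm T} := perm (can_inj (shearK al be)).

Lemma shear_permE al be w : shear_perm al be w = shear al be w.
Proof. exact: permE. Qed.

Lemma shear_permM al be ga de :
  (shear_perm al be * shear_perm ga de)%g = shear_perm (al + ga) (be + de).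
Proof.
apply/permP => -[[w1 w2] w3]; rewrite permM !shear_permE /shear /=.
congr (_, _, _); ring.
Qed.

Lemma shear_perm0 : shear_perm 0 0 = 1%g.
Proof. by apply/permP => -[[w1 w2] w3]; rewrite perm1 shear_permE /shear /= !mul0r !addr0. Qed.

Definition shears : {set {perm T}} := [set shear_perm al be | al in Z, be in Z].

Lemma shears_group_set : group_set shears.
Proof.
apply/group_setP; split; first by rewrite -shear_perm0; apply: imset2_f.
move=> _ _ /imset2P[al be _ _ ->] /imset2P[ga de _ _ ->].
by rewrite shear_permM; apply: imset2_f.
Qed.

Canonical shears_group := group shears_group_set.

(* The shear attached to the pair (u, v); both L_{u,v} and R_{u,v} equal it. *)
Definition shear_of (u v : T) : {perm T} := shear_perm (u.2 * v.2) (- (u.2 * v.1.2)).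

(* L_{u,v}(w) = (vu)\(v(uw)) is w shifted by an associator defect (ii). *)
Lemma Lmap_shear u v : fperm (Lmap mul u v) = shear_of u v.
Proof.
apply: fperm_eq => w; rewrite shear_permE /Lmap ldiv_assoc.
case: u v w => [[u1 u2] u3] [[v1 v2] v3] [[w1 w2] w3].
by rewrite /shift /assoc_defect /shear /=; congr (_, _, _); ring.
Qed.

(* R_{u,v}(w) = ((wu)v)/(uv) undoes the associator shift of w(uv). *)
Lemma Rmap_shear u v : fperm (Rmap mul u v) = shear_of u v.
Proof.
apply: fperm_eq => w; rewrite shear_permE /Rmap; apply: rdiv_cancel mul_cancel_r _ _ _ _.
have -> : shear (u.2 * v.2) (- (u.2 * v.1.2)) w = shift w (- assoc_defect w u v).
  case: u v w => [[u1 u2] u3] [[v1 v2] v3] [[w1 w2] w3].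
  by rewrite /shift /assoc_defect /shear /=; congr (_, _, _); ring.
by rewrite mulC mul_shift mulC mul_assoc_shift shiftK.
Qed.

(* T_u is the identity, Q being commutative. *)
Lemma Tmap_id u : fperm (Tmap mul u) = 1%g.
Proof.
apply: fperm_eq => w; rewrite perm1 /Tmap.
by apply: ldiv_cancel mul_cancel _ _ _ _; rewrite mulC.
Qed.

(* Every shear is some L_{u,v}: take u = (0,0,1), v = (0,-be,al). *)
Lemma Lset_eq : Lset mul = shears.
Proof.
apply/setP => p; apply/imset2P/imset2P => -[u v _ _ ->].
  by rewrite Lmap_shear; exists (u.2 * v.2) (- (u.2 * v.1.2)).
exists (0, 0, 1) (0, - v, u) => //.
by rewrite Lmap_shear /shear_of /= !mul1r opprK.
Qed.

(* Inn(Q) is the group of shears: its generators are shears, and Lset already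
   contains all of them. *)
Lemma Inn_eq : Inn mul = shears.
Proof.
apply/eqP; rewrite eqEsubset; apply/andP; split.
  rewrite (gen_subG _ shears_group) /= !subUset Lset_eq subxx /=; apply/andP; split.
    apply/subsetP => _ /imset2P[u v _ _ ->].
    by rewrite Rmap_shear; apply: imset2_f.
  apply/subsetP => _ /imsetP[u _ ->].
  by rewrite Tmap_id -shear_perm0; apply: imset2_f.
by rewrite -Lset_eq; apply: sub_gen; rewrite -setUA subsetUl.
Qed.

Lemma Inn_aut p : p \in Inn mul -> forall x y, p (mul x y) = mul (p x) (p y).
Proof.
rewrite Inn_eq => /imset2P[al be _ _ ->] [[x1 x2] x3] [[y1 y2] y3].
by rewrite !shear_permE /shear !mulE /=; congr (_, _, _); ring.
Qed.

Definition shear_coords (p : {perm T}) : Z * Z := ((p (0, 1, 0)).1.1, (p (0, 0, 1)).1.1).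

Lemma shear_coordsE al be : shear_coords (shear_perm al be) = (al, be).
Proof. by rewrite /shear_coords !shear_permE /shear /=; congr (_, _); ring. Qed.

Lemma Inn_iso :
  exists psi : {perm T} -> Z * Z,
    {in Inn mul &, injective psi} /\ psi @: Inn mul = setT /\
    {in Inn mul &, forall p q, psi (p * q)%g = addZ2 (psi p) (psi q)}.
Proof.
exists shear_coords; rewrite Inn_eq; split; [|split].
- move=> _ _ /imset2P[al be _ _ ->] /imset2P[ga de _ _ ->].
  by rewrite !shear_coordsE => -[-> ->].
- apply/setP => -[al be]; rewrite inE; apply/imsetP.
  by exists (shear_perm al be); [apply: imset2_f | rewrite shear_coordsE].
- move=> _ _ /imset2P[al be _ _ ->] /imset2P[ga de _ _ ->].
  by rewrite shear_permM !shear_coordsE.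
Qed.

Lemma carry_sum_step (x : Z) m :
  \sum_(1 <= k < m.+1) ovf x (x *+ k) = \sum_(1 <= k < m) ovf x (x *+ k) + ovf x (x *+ m).
Proof.
case: m => [|m]; first by rewrite !big_geq // mulr0n ovf0r addr0.
by rewrite big_nat_recr.
Qed.

(* 2 C(m+1, 2) = (m+1) m, which drives the growth of the binomial term. *)
Lemma double_bin2 m : (2 * 'C(m.+1, 2) = m.+1 * m)%N.
Proof. by elim: m => [|m IH] //; rewrite binS bin1 mulnDr IH; lia. Qed.

Lemma qexpE x1 x2 x3 m : qexp mul e (x1, x2, x3) m =
  (x1 *+ m + 2 * ('C(m.+1, 3))%:R * x2 * x3 ^+ 2
     + a * \sum_(1 <= k < m) ovf x2 (x2 *+ k) + b * \sum_(1 <= k < m) ovf x3 (x3 *+ k),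
   x2 *+ m, x3 *+ m).
Proof.
elim: m => [|m IH].
  by rewrite /qexp /= !big_geq // bin_small //; congr (_, _, _); ring.
rewrite /qexp iterS -/(qexp mul e (x1, x2, x3) m) IH mulE !carry_sum_step.
rewrite (ovfC (x2 *+ m)) (ovfC (x3 *+ m)) (binS m.+1 2) natrD.
have bin2 : (2 : Z) * ('C(m.+1, 2))%:R = m.+1%:R * m%:R by rewrite -natrM double_bin2 natrM.
congr (_, _, _); ring: bin2.
Qed.

End LoopQ.

Theorem proposition5p4 (n : nat) (a b : 'Z_n) : (1 < n)%N ->
  let mul := @mulQ n a b in
  let e : Qt n := (0, 0, 0) in
  (* (i) *)
  (forall x1 x2 x3 y1 y2 y3 : 'Z_n,
     ldiv mul (x1, x2, x3) (y1, y2, y3) =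
       (y1 - x1 - (y3 - x3) * x3 * y2 - a * ovf x2 (y2 - x2) - b * ovf x3 (y3 - x3),
        y2 - x2, y3 - x3)) /\
  (* (ii) *)
  (forall x1 x2 x3 y1 y2 y3 z1 z2 z3 : 'Z_n,
     let x := (x1, x2, x3) in let y := (y1, y2, y3) in let z := (z1, z2, z3) in
     ldiv mul (mul x y) (mul x (mul y z)) = (z1 + y3 * (x3 * z2 - x2 * z3), z2, z3)) /\
  (* (iii) *)
  (is_Aloop mul e /\ commutative_op mul /\ ~ associative_op mul /\
   #|[set: Qt n]| = (n ^ 3)%N) /\
  (* (iv) *)
  (Nlam mul = [set x : Qt n | (x.1.2 == 0) && (x.2 == 0)] /\
   Zc mul = [set x : Qt n | (x.1.2 == 0) && (x.2 == 0)] /\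
   Nmu mul = [set x : Qt n | x.2 == 0]) /\
  (* (v) *)
  ((exists phi : {set Qt n} -> 'Z_n * 'Z_n,
      {in quotZ mul &, injective phi} /\ phi @: quotZ mul = setT /\
      (forall x y, phi (zcoset mul (mul x y)) =
                   addZ2 (phi (zcoset mul x)) (phi (zcoset mul y)))) /\
   (exists psi : {perm Qt n} -> 'Z_n * 'Z_n,
      {in Inn mul &, injective psi} /\ psi @: Inn mul = setT /\
      {in Inn mul &, forall p q, psi (p * q)%g = addZ2 (psi p) (psi q)}) /\
   Inn mul = Lset mul) /\
  (* (vi) *)
  (forall (x1 x2 x3 : 'Z_n) (m : nat),
     let t2 := \sum_(1 <= k < m) ovf x2 (x2 *+ k) in
     let t3 := \sum_(1 <= k < m) ovf x3 (x3 *+ k) in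
     qexp mul e (x1, x2, x3) m =
       (x1 *+ m + 2 * ('C(m.+1, 3))%:R * x2 * x3 ^+ 2 + a * t2 + b * t3,
        x2 *+ m, x3 *+ m)).
Proof.
case: n a b => [|[|n']] // a b _ mul e.
split; first by move=> *; rewrite ldivE.
split; first by move=> *; rewrite ldiv_assoc.
split.
  split; first by split; [exact: mulQ_loop | exact: Inn_aut].
  by split; [exact: mulC | split; [exact: mulQ_nonassoc | exact: card_Q]].
split; first by split; [exact: Nlam_eq | split; [exact: Zc_eq | exact: Nmu_eq]].
split; last exact: qexpE.
by split; [exact: quotZ_iso | split; [exact: Inn_iso | rewrite Inn_eq Lset_eq]].
Qed.
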